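(* Let $R$ be a finite chain ring and let $C\subseteq R^n$ be a nonzero $R$-linear code of length $n$, rank $K$, locality $r\ge 1$ and minimum distance $d$. Then $$d\le n-K-\left\lceil\frac{K}{r}\right\rceil+2.$$
   Context: A finite chain ring is a finite commutative local ring whose ideals are totally ordered by inclusion. An $R$-linear code is an $R$-submodule $C\subseteq R^n$. The rank of $C$ is the minimum $K$ such that there is an $R$-module monomorphism $C\to R^K$. A coordinate $i$ has locality $r$ if there is $S_i\subseteq\{1,\dots,n\}\setminus\{i\}$ with $|S_i|\le r$ and $|C_{S_i}|=|C_{S_i\cup\{i\}}|$, where $C_S$ is the code punctured to the coordinates in $S$; $C$ has locality $r$ if every coordinate does. $d$ is the minimum Hamming weight of a nonzero codeword. *)

From HB Require Import structures.
From mathcomp Require Import all_boot all_order all_algebra.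
Set Implicit Arguments. Unset Strict Implicit. Unset Printing Implicit Defensive.
Import GRing.Theory.
Local Open Scope ring_scope.

Definition is_ideal (R : finComNzRingType) (I : {set R}) : Prop :=
  [/\ 0 \in I,
      (forall x y, x \in I -> y \in I -> x + y \in I) &
      (forall a x, x \in I -> a * x \in I)].

Definition is_maximal_ideal (R : finComNzRingType) (M : {set R}) : Prop :=
  [/\ is_ideal M, M != setT &
      (forall J : {set R}, is_ideal J -> M \subset J -> J = M \/ J = setT)].

Definition is_local_ring (R : finComNzRingType) : Prop :=
  exists M : {set R}, is_maximal_ideal M /\
    forall M' : {set R}, is_maximal_ideal M' -> M' = M.

(* finite chain ring: finite commutative local ring whose ideals are totally
   ordered by inclusion (finiteness and commutativity come from the type). *)
Definition is_chain_ring (R : finComNzRingType) : Prop :=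
  is_local_ring R /\
  forall I J : {set R}, is_ideal I -> is_ideal J -> (I \subset J) || (J \subset I).

Definition is_linear_code (R : finComNzRingType) (n : nat) (C : {set 'rV[R]_n}) : Prop :=
  [/\ 0 \in C,
      (forall x y, x \in C -> y \in C -> x + y \in C) &
      (forall (a : R) x, x \in C -> a *: x \in C)].

Definition code_mono (R : finComNzRingType) (n K : nat) (C : {set 'rV[R]_n})
  (f : 'rV[R]_n -> 'rV[R]_K) : Prop :=
  (forall (a : R) x y, x \in C -> y \in C -> f (a *: x + y) = a *: f x + f y) /\
  {in C &, injective f}.

Definition code_rank (R : finComNzRingType) (n : nat) (C : {set 'rV[R]_n}) (K : nat) : Prop :=
  (exists f : 'rV[R]_n -> 'rV[R]_K, code_mono C f) /\
  forall K' : nat, (exists f : 'rV[R]_n -> 'rV[R]_K', code_mono C f) -> (K <= K')%N.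

(* C_S: the code punctured to coordinates in S (other coordinates zeroed,
   which gives a set in bijection with the restrictions to S). *)
Definition puncture (R : finComNzRingType) (n : nat) (S : {set 'I_n})
  (C : {set 'rV[R]_n}) : {set 'rV[R]_n} :=
  [set (\row_i (if i \in S then c 0 i else 0)) | c : 'rV[R]_n in C].

Definition has_locality (R : finComNzRingType) (n : nat) (C : {set 'rV[R]_n}) (r : nat) : Prop :=
  forall i : 'I_n, exists S : {set 'I_n},
    [/\ i \notin S, (#|S| <= r)%N & #|puncture S C| = #|puncture (i |: S) C|].

Definition wt (R : finComNzRingType) (n : nat) (c : 'rV[R]_n) : nat :=
  #|[set i : 'I_n | c 0 i != 0]|.

Definition min_distance (R : finComNzRingType) (n : nat) (C : {set 'rV[R]_n}) (d : nat) : Prop :=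
  (exists2 c : 'rV[R]_n, c \in C & c != 0 /\ wt c = d) /\
  forall c : 'rV[R]_n, c \in C -> c != 0 -> (d <= wt c)%N.

Definition ceil_div (a b : nat) : nat := ((a + b.-1) %/ b)%N.

From mathcomp Require Import all_boot all_order all_algebra.
From mathcomp Require Import zify.
From Stdlib Require Import Classical.
Import GRing.Theory.
Set Implicit Arguments. Unset Strict Implicit.
Local Open Scope ring_scope.

(* Call W determined by U when every codeword vanishing on U vanishes on W.
   Starting from U = W = {} we grow a pair U ⊆ W with U determining W: adding
   the missing part of a recovery set S of a point x outside W costs at most r
   points of U and gains at least one more point of W than of U (namely x);
   after ceil(K/r) - 1 such rounds we add single points up to |U| = K - 1.
   Since restriction to U cannot be injective on C when |U| < K, some nonzero
   codeword vanishes on U, hence on W, so d <= n - |W| <= n - (K - 1) -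
   (ceil(K/r) - 1). *)

Lemma ceil_div_gt0 (K r : nat) : (0 < K)%N -> (0 < r)%N -> (0 < ceil_div K r)%N.
Proof. by move=> K_gt0 r_gt0; rewrite /ceil_div divn_gt0 //; lia. Qed.

Lemma pred_ceil_div_mul_lt (K r : nat) :
  (0 < K)%N -> (0 < r)%N -> ((ceil_div K r).-1 * r < K)%N.
Proof.
move=> K_gt0 r_gt0; have := ceil_div_gt0 K_gt0 r_gt0.
have := leq_divM (K + r.-1) r; rewrite /ceil_div.
case: ((K + r.-1) %/ r)%N => // q; rewrite mulSn /=; lia.
Qed.

Section Locality.
Variables (R : finComNzRingType) (n : nat) (C : {set 'rV[R]_n}).

Definition vanishes_on (U : {set 'I_n}) (c : 'rV[R]_n) := {in U, forall k, c 0 k = 0}.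

Definition determines (U W : {set 'I_n}) :=
  forall c, c \in C -> vanishes_on U c -> vanishes_on W c.

Lemma vanishes_onU (A B : {set 'I_n}) c :
  vanishes_on (A :|: B) c <-> vanishes_on A c /\ vanishes_on B c.
Proof.
split=> [vAB | [vA vB] k]; last by rewrite inE => /orP [/vA | /vB].
by split=> k kA; apply: vAB; rewrite inE kA ?orbT.
Qed.

Lemma wt_le_vanishes_on (W : {set 'I_n}) c : vanishes_on W c -> (wt c <= n - #|W|)%N.
Proof.
move=> vW; have -> : (n - #|W| = #|~: W|)%N by have := cardsC W; rewrite card_ord; lia.
apply: subset_leq_card; apply/subsetP=> k; rewrite !inE.
by apply: contra => kW; rewrite vW.
Qed.

Lemma recovery_set_vanishes (i : 'I_n) (S : {set 'I_n}) :
  0 \in C -> #|puncture S C| = #|puncture (i |: S) C| ->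
  forall c, c \in C -> vanishes_on S c -> c 0 i = 0.
Proof.
move=> C0 card_eq c cC vS.
pose restr (A : {set 'I_n}) (v : 'rV[R]_n) :=
  (\row_k (if k \in A then v 0 k else 0) : 'rV[R]_n).
have restrS v : restr S (restr (i |: S) v) = restr S v.
  by apply/rowP=> k; rewrite !mxE; case: ifP => // kS; rewrite setU1r.
have punctureS : puncture S C = restr S @: (restr (i |: S) @: C).
  by rewrite -imset_comp; apply: eq_imset => v /=; rewrite restrS.
(* Equal cardinalities make the restriction from i |: S to S injective on C. *)
have restr_inj : {in restr (i |: S) @: C &, injective (restr S)}.
  by apply/imset_injP; rewrite -punctureS card_eq.
have : restr (i |: S) c = restr (i |: S) 0.
  apply: restr_inj; rewrite ?imset_f // !restrS.
  by apply/rowP=> k; rewrite !mxE; case: ifP => // kS; rewrite vS.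
by move/rowP/(_ i); rewrite !mxE setU11 => ->; rewrite ?mxE.
Qed.

Lemma determinesU1 (U W : {set 'I_n}) x :
  determines U W -> determines (x |: U) (x |: W).
Proof.
move=> dUW c cC /vanishes_onU [vx vU].
by apply/vanishes_onU; split=> //; apply: dUW.
Qed.

Lemma determines_recovery_set (U W S : {set 'I_n}) x :
  0 \in C -> #|puncture S C| = #|puncture (x |: S) C| ->
  U \subset W -> determines U W ->
  determines (U :|: (S :\: W)) (x |: (W :|: S)).
Proof.
move=> C0 recS sUW dUW c cC /vanishes_onU [vU vSW].
have vW : vanishes_on W c by apply: dUW.
have vS : vanishes_on S c.
  by move=> k kS; case: (boolP (k \in W)) => [/vW | kW] //; apply: vSW; rewrite inE kW.
apply/vanishes_onU; split; last exact/vanishes_onU.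
by move=> k; rewrite inE => /eqP ->; exact: recovery_set_vanishes C0 recS c cC vS.
Qed.

Variables (K r : nat).
Hypotheses (C_linear : is_linear_code C) (C_rank : code_rank C K)
  (C_local : has_locality C r).

Lemma code_rank_le_card (U : {set 'I_n}) :
  (forall c, c \in C -> vanishes_on U c -> c = 0) -> (K <= #|U|)%N.
Proof.
case: C_linear => _ CD CZ vU_eq0; apply: C_rank.2.
exists (fun c => \row_(j < #|U|) c 0 (enum_val j)); split.
  by move=> a x y _ _; apply/rowP=> j; rewrite !mxE.
move=> x y xC yC /rowP xy_eq; apply/eqP; rewrite -subr_eq0; apply/eqP/vU_eq0.
  by rewrite -scaleN1r addrC; apply: CD => //; apply: CZ.
move=> k kU; have := xy_eq (enum_rank_in kU k).
by rewrite !mxE enum_rankK_in // => ->; rewrite ?mxE subrr.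
Qed.

Lemma exists_nonzero_codeword_vanishes_on (U : {set 'I_n}) :
  (#|U| < K)%N -> exists2 c, c \in C & c != 0 /\ vanishes_on U c.
Proof.
move=> ltUK; apply: NNPP => no_c.
suff : (K <= #|U|)%N by rewrite leqNgt ltUK.
apply: code_rank_le_card => c cC vU.
by apply/eqP/negPn/negP => c_neq0; apply: no_c; exists c.
Qed.

Lemma determines_proper (U W : {set 'I_n}) :
  determines U W -> (#|U| < K)%N -> exists x, x \notin W.
Proof.
move=> dUW /exists_nonzero_codeword_vanishes_on [c cC [c_neq0 vU]].
have [x xW | W_full] := pickP [predC W]; first by exists x.
case/eqP: c_neq0; apply/rowP=> k; rewrite [RHS]mxE; apply: (dUW c cC vU).
by have := W_full k; rewrite inE => /negbFE.
Qed.

Lemma grow_by_recovery_sets (j : nat) : (j * r < K)%N ->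
  exists U W : {set 'I_n},
    [/\ U \subset W, determines U W, (#|U| <= j * r)%N & (#|U| + j <= #|W|)%N].
Proof.
have C0 : 0 \in C by case: C_linear.
elim: j => [|j IH] ltjK.
  by exists set0, set0; split; rewrite ?sub0set ?cards0.
have [|U [W [sUW dUW leUj leUW]]] := IH; first by rewrite mulSn in ltjK; lia.
have [x xW] := determines_proper dUW ltac:(rewrite mulSn in ltjK; lia).
have [S [xS leSr recS]] := C_local x.
exists (U :|: (S :\: W)), (x |: (W :|: S)); split.
- apply/subsetP=> k; rewrite !inE.
  by case/orP=> [/(subsetP sUW) -> | /andP [_ ->]]; rewrite !orbT.
- exact: determines_recovery_set.
- have := cardsU U (S :\: W); have := subset_leq_card (subsetDl S W).
  rewrite mulSn; lia.
- have cardWS : #|W :|: S| = (#|W| + #|S :\: W|)%N.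
    by have := cardsU W S; have := cardsID W S; rewrite (setIC S W); lia.
  rewrite cardsU1 cardWS !inE negb_or xW xS add1n addnS ltnS.
  apply: leq_trans (leq_add (leq_card_setU U (S :\: W)).1 (leqnn j)) _.
  by rewrite addnAC leq_add2r.
Qed.

Lemma grow_by_points (m : nat) (U W : {set 'I_n}) :
  U \subset W -> determines U W -> (#|U| + m < K)%N ->
  exists U' W' : {set 'I_n},
    [/\ determines U' W', #|U'| = (#|U| + m)%N & #|W'| = (#|W| + m)%N].
Proof.
elim: m U W => [|m IH] U W sUW dUW ltUK; first by exists U, W; rewrite !addn0.
have [x xW] := determines_proper dUW ltac:(lia).
have xU : x \notin U by apply: contra xW; apply: (subsetP sUW).
have ltxUK : (#|x |: U| + m < K)%N by rewrite cardsU1 xU add1n addSnnS.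
have [U' [W' [dUW' cardU' cardW']]] :=
  IH _ _ (setUS [set x] sUW) (determinesU1 (x := x) dUW) ltxUK.
by exists U', W'; rewrite cardU' cardW' !cardsU1 xU xW !add1n !addSnnS.
Qed.

End Locality.

Theorem mainTheorem3 (R : finComNzRingType) (n : nat) (C : {set 'rV[R]_n})
  (K r d : nat) :
  is_chain_ring R ->
  is_linear_code C ->
  C != [set 0] ->
  code_rank C K ->
  (1 <= r)%N ->
  has_locality C r ->
  min_distance C d ->
  (d%:Z <= n%:Z - K%:Z - (ceil_div K r)%:Z + 2)%R.
Proof.
move=> _ C_linear _ C_rank r_gt0 C_local [[c0 c0C [_ <-]] d_min].
have [-> | K_gt0] := posnP K.
  have : (wt c0 <= n)%N by apply: leq_trans (max_card _) _; rewrite card_ord.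
  by rewrite /ceil_div add0n divn_small ?prednK //; lia.
have lt_lr_K := pred_ceil_div_mul_lt K_gt0 r_gt0.
have [U [W [sUW dUW leUl leUW]]] :=
  grow_by_recovery_sets C_linear C_rank C_local lt_lr_K.
have [U' [W' [dUW' cardU' cardW']]] :=
  grow_by_points C_linear C_rank (m := K.-1 - #|U|) sUW dUW ltac:(lia).
have [c cC [c_neq0 vU']] :=
  exists_nonzero_codeword_vanishes_on C_linear C_rank (U := U') ltac:(lia).
have W'_le_n : (#|W'| <= n)%N by apply: leq_trans (max_card _) _; rewrite card_ord.
have := d_min c cC c_neq0; have := wt_le_vanishes_on (dUW' c cC vU').
have := ceil_div_gt0 K_gt0 r_gt0; lia.
Qed.
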